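(* Let $E\subset[0,1)$ be a measurable set of positive Lebesgue measure and let $T\in\mathrm{IET}$. Then there exist $x_0\in[0,1)$ and constants $\alpha>0$, $\beta>0$ such that for all $n\geq 1$, $$\#\{i : 0\leq i<n,\ T^i(x_0)\in E\}\geq \alpha n-\beta.$$
   Context: $\mathrm{IET}$ denotes the group of interval exchange transformations of $[0,1)$: bijections of $[0,1)$ that are orientation-preserving piecewise isometries (piecewise translations), left-continuous, with finitely many discontinuity points. *)

From HB Require Import structures.
From mathcomp Require Import all_boot all_order all_algebra.
From mathcomp Require Import all_classical all_reals all_analysis.
Set Implicit Arguments. Unset Strict Implicit. Unset Printing Implicit Defensive.
Import Order.TTheory GRing.Theory Num.Theory.
Local Open Scope classical_set_scope.
Local Open Scope ring_scope.

Definition I01 {R : realType} : set R := [set x | 0 <= x < 1].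

Definition is_IET {R : realType} (T : R -> R) : Prop :=
  (forall x, I01 x -> I01 (T x)) /\
  (forall x y, I01 x -> I01 y -> T x = T y -> x = y) /\
  (forall y, I01 y -> exists x, I01 x /\ T x = y) /\
  exists (k : nat) (a t : nat -> R),
    a 0%N = 0 /\ a k = 1 /\ (forall i, (i < k)%N -> a i < a i.+1) /\
    (forall i x, (i < k)%N -> a i <= x < a i.+1 -> T x = x + t i).

Definition visits {R : realType} (T : R -> R) (E : set R) (x0 : R) (n : nat) : nat :=
  #|[set i : 'I_n | `[< E (iter i T x0) >] ]|.

(* An interval exchange is a bijection of [0,1) that translates each of finitely
   many pieces, so it preserves Lebesgue measure on [0,1).  For any such
   measure-preserving map and [c = mu(E)/2], call [y] good up to [M] when its first
   [n] iterates visit [E] at least [c n] times for every [n <= M].  Cutting an orbit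
   into bad stretches of length at most [M] and single good steps gives
   [visits_E(x, L) <= c L + M + visits_G(x, L)] with [G] the good set; integrating
   over [0,1) and letting [L] grow yields [mu(E) <= c + mu(G_M)].  If no point were
   good for every [M], the decreasing sets [G_M] would shrink to the empty set, so
   [mu(E) <= mu(E)/2], a contradiction.  A point good for every [M] satisfies the
   theorem with [alpha = c] and any [beta > 0]. *)

From HB Require Import structures.
From mathcomp Require Import all_boot all_order all_algebra.
From mathcomp Require Import all_classical all_reals all_analysis.
From mathcomp Require Import lra measurable_realfun.
Set Implicit Arguments. Unset Strict Implicit. Unset Printing Implicit Defensive.
Import Order.TTheory GRing.Theory Num.Theory.
Local Open Scope classical_set_scope.
Local Open Scope ring_scope.

Section lebesgue_measure_translation.
Context {R : realType}.
Local Notation mu := (@lebesgue_measure R).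

Lemma measurable_translate (t : R) (A : set R) :
  measurable A -> measurable [set x | A (x + t)].
Proof.
move=> mA; rewrite -[X in measurable X]setTI.
by apply: measurable_funD => //; exact: measurable_cst.
Qed.

Lemma lebesgue_measure_translate (t : R) (A : set R) :
  measurable A -> mu [set x | A (x + t)] = mu A.
Proof.
pose shift : measurableTypeR R -> measurableTypeR R := fun x => x + t.
have mshift : measurable_fun [set: measurableTypeR R] shift.
  by apply: measurable_funD => //; exact: measurable_cst.
move=> mA; symmetry.
(* The pushforward is a measure only given [mshift], hence the explicit instance. *)
pose nu := measure_function_pushforward__canonical__measure_function_Measure mu mshift.
apply: (@lebesgue_measure_unique R nu) => // _ [[x y] _ <-].
rewrite /= /pushforward.
have -> : shift @^-1` `]x, y]%classic = `](x - t), (y - t)]%classic.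
  apply/seteqP; split => z /=; rewrite /shift !in_itv /=.
    by move=> /andP[? ?]; apply/andP; split; lra.
  by move=> /andP[? ?]; apply/andP; split; lra.
rewrite !lebesgue_measure_itv /= !lte_fin ltrD2r -EFinD.
by case: ifP => // _; congr (_%:E); lra.
Qed.

End lebesgue_measure_translation.

Section unit_interval.
Context {R : realType}.
Local Notation mu := (@lebesgue_measure R).

Lemma I01_itv : I01 = `[0, 1[%classic :> set R.
Proof. by apply/seteqP; split => x; rewrite /I01 /= in_itv. Qed.

Lemma measurable_I01 : measurable (I01 : set R).
Proof. by rewrite I01_itv; exact: measurable_itv. Qed.

Lemma lebesgue_measure_I01 : mu I01 = 1%E.
Proof. by rewrite I01_itv lebesgue_measure_itv /= lte_fin ltr01 oppr0 adde0. Qed.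

Lemma fin_num_measure_I01 (B : set R) : measurable (I01 `&` B) ->
  mu (I01 `&` B) \is a fin_num.
Proof.
move=> mB; rewrite ge0_fin_numE // (le_lt_trans _ (ltry 1)) //.
by rewrite -lebesgue_measure_I01 le_measure // inE //; exact: measurable_I01.
Qed.

End unit_interval.

Section interval_exchange.
Context {R : realType} (T : R -> R) (k : nat) (a t : nat -> R).
Local Notation mu := (@lebesgue_measure R).
Hypothesis T_I01 : forall x, I01 x -> I01 (T x).
Hypothesis T_inj : forall x y, I01 x -> I01 y -> T x = T y -> x = y.
Hypothesis T_surj : forall y, I01 y -> exists x, I01 x /\ T x = y.
Hypothesis a0 : a 0%N = 0.
Hypothesis ak : a k = 1.
Hypothesis lt_a : forall i, (i < k)%N -> a i < a i.+1.
Hypothesis T_piece : forall i x, (i < k)%N -> a i <= x < a i.+1 -> T x = x + t i.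

Definition piece i : set R := `[a i, a i.+1[%classic.

Lemma breakpoint_le i j : (i <= j <= k)%N -> a i <= a j.
Proof.
case/andP=> /subnKC <-; elim: (j - i)%N => [|d IH]; first by rewrite addn0.
rewrite addnS => lt_k; exact: le_trans (IH (ltnW lt_k)) (ltW (lt_a lt_k)).
Qed.

Lemma piece_I01 i : (i < k)%N -> piece i `<=` I01.
Proof.
move=> lt_ik x; rewrite /piece /= in_itv /= => /andP[aix xai]; apply/andP; split.
  by rewrite -a0 (le_trans _ aix) // breakpoint_le //= ltnW.
by rewrite -ak (lt_le_trans xai) //; apply: breakpoint_le; rewrite lt_ik leqnn.
Qed.

Lemma exists_piece x : I01 x -> exists2 i, (i < k)%N & piece i x.
Proof.
case/andP=> x0 x1.
suff /(_ k (leqnn k)) : forall j, (j <= k)%N -> x < a j ->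
    exists2 i, (i < j)%N & piece i x.
  by rewrite ak => /(_ x1).
elim=> [|j IH] le_jk xaj; first by rewrite a0 ltNge x0 in xaj.
have [xa|ax] := ltP x (a j).
  by have [i lt_ij] := IH (ltnW le_jk) xa; exists i => //; exact: ltnW.
by exists j => //; rewrite /piece /= in_itv /= ax.
Qed.

Lemma piece_disjoint i j x : (i < k)%N -> (j < k)%N ->
  piece i x -> piece j x -> i = j.
Proof.
have below p q : (p < q < k)%N -> piece p x -> ~ piece q x.
  case/andP=> lt_pq lt_qk; rewrite /piece /= !in_itv /= => /andP[_ xap] /andP[aqx _].
  have apq : a p.+1 <= a q by apply: breakpoint_le; rewrite lt_pq ltnW.
  by move: (lt_le_trans xap (le_trans apq aqx)); rewrite ltxx.
move=> lt_ik lt_jk ix jx; have [lt_ij|lt_ji|//] := ltngtP i j.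
- by have := below i j; rewrite lt_ij lt_jk => /(_ isT ix jx).
- by have := below j i; rewrite lt_ji lt_ik => /(_ isT jx ix).
Qed.

Lemma I01_preimageE B :
  I01 `&` T @^-1` B = \bigcup_(i in `I_k) (piece i `&` [set x | B (x + t i)]).
Proof.
apply/seteqP; split=> x.
  case=> Ix Bx; have [i lt_ik ix] := exists_piece Ix.
  by exists i => //; split => //=; rewrite -(T_piece lt_ik ix).
case=> i /= lt_ik [ix Bx]; split; first exact: piece_I01 ix.
by rewrite /preimage /= (T_piece lt_ik ix).
Qed.

Lemma I01_setIE B :
  I01 `&` B = \bigcup_(i in `I_k) ([set y | piece i (y - t i)] `&` B).
Proof.
apply/seteqP; split=> y.
  case=> Iy By; have [x [Ix Txy]] := T_surj Iy; have [i lt_ik ix] := exists_piece Ix.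
  exists i => //; split => /=; last by [].
  by rewrite -Txy (T_piece lt_ik ix) addrK.
case=> i /= lt_ik [iy By]; split => //.
by rewrite -[y](subrK (t i)) -(T_piece lt_ik iy); apply/T_I01/(piece_I01 lt_ik).
Qed.

Lemma measurable_IET_preimage B : measurable B -> measurable (I01 `&` T @^-1` B).
Proof.
move=> mB; rewrite I01_preimageE; apply: fin_bigcup_measurable => // i _.
by apply: measurableI; [exact: measurable_itv | exact: measurable_translate].
Qed.

Lemma measure_IET_preimage B : measurable B -> mu (I01 `&` T @^-1` B) = mu (I01 `&` B).
Proof.
move=> mB.
have mpiece i : measurable [set y | piece i (y - t i)].
  by apply: measurable_translate; exact: measurable_itv.
rewrite I01_preimageE I01_setIE !measure_fin_bigcup //.
- apply: eq_fsbigr => i _.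
  transitivity (mu [set x | ([set y | piece i (y - t i)] `&` B) (x + t i)]).
    by congr (mu _); apply/seteqP; split => x /=; rewrite addrK.
  by apply: lebesgue_measure_translate; exact: measurableI (mpiece i) mB.
- move=> i j lt_ik lt_jk [y /= [[iy _] [jy _]]].
  suff eq_ij : y - t i = y - t j by rewrite eq_ij in iy; exact: piece_disjoint iy jy.
  apply: T_inj; [exact: piece_I01 iy | exact: piece_I01 jy |].
  by rewrite (T_piece lt_ik iy) (T_piece lt_jk jy) !subrK.
- by move=> i _; exact: measurableI (mpiece i) mB.
- by move=> i j lt_ik lt_jk [x [[ix _] [jx _]]]; exact: piece_disjoint ix jx.
- by move=> i _; apply: measurableI; [exact: measurable_itv | exact: measurable_translate].
Qed.

End interval_exchange.

Section visit_count.
Context {R : realDomainType} {U : Type} (T : U -> U).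

Definition visit_count (A : set U) (x : U) (n : nat) : R :=
  \sum_(i < n) \1_A (iter i T x).

Lemma visit_count0 A x : visit_count A x 0 = 0.
Proof. by rewrite /visit_count big_ord0. Qed.

Lemma visit_countD A x m n :
  visit_count A x (m + n) = visit_count A x m + visit_count A (iter m T x) n.
Proof.
rewrite /visit_count big_split_ord /=; congr (_ + _).
by apply: eq_bigr => i _; rewrite addnC iterD.
Qed.

Lemma visit_countS A x n :
  visit_count A x n.+1 = \1_A x + visit_count A (T x) n.
Proof. by rewrite -add1n visit_countD /visit_count big_ord1. Qed.

Lemma visit_count_ge0 A x n : 0 <= visit_count A x n.
Proof. by apply: sumr_ge0 => i _; rewrite indicE ler0n. Qed.

Lemma visit_count_le A x n : visit_count A x n <= n%:R.
Proof.
rewrite -[n in n%:R]card_ord -sumr_const.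
by apply: ler_sum => i _; rewrite indicE lern1 leq_b1.
Qed.

Definition good_set (A : set U) (c : R) (M : nat) : set U :=
  [set y | forall n, (n <= M)%N -> c * n%:R <= visit_count A y n].

Lemma good_set_subset A c M N : (M <= N)%N -> good_set A c N `<=` good_set A c M.
Proof. by move=> MN y Gy n nM; exact/Gy/(leq_trans nM). Qed.

Lemma visit_count_le_good_set A c M x L : 0 <= c ->
  visit_count A x L <= c * L%:R + M%:R + visit_count (good_set A c M) x L.
Proof.
move=> c0; elim/ltn_ind: L x => L IH x.
have [Gx|Gx] := pselect (good_set A c M x).
  case: L IH => [|L] IH; first by rewrite !visit_count0 mulr0 add0r addr0.
  rewrite !visit_countS [\1_(good_set _ _ _) x]indicE mem_set // mulr1n.
  have := IH L (ltnSn L) (T x).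
  have : \1_A x <= 1 :> R by rewrite indicE lern1 leq_b1.
  have : c * L%:R <= c * L.+1%:R by rewrite ler_wpM2l // ler_nat.
  lra.
have /existsNP[n /not_implyP[nM /negP]] := Gx; rewrite -ltNge => bad_n.
have := visit_count_ge0 (good_set A c M) x L.
have [nL|Ln] := leqP n L.
  rewrite -(subnKC nL) !visit_countD natrD mulrDr.
  have n0 : (0 < n)%N by case: n bad_n {nM nL} => //; rewrite visit_count0 mulr0 ltxx.
  have ltLn : (L - n < L)%N by rewrite ltn_subrL n0 (leq_trans n0 nL).
  have := IH _ ltLn (iter n T x).
  have := visit_count_ge0 (good_set A c M) x n.
  lra.
have : (L%:R : R) <= M%:R by rewrite ler_nat (leq_trans (ltnW Ln)).
have := visit_count_le A x L.
have : 0 <= c * L%:R by rewrite mulr_ge0.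
lra.
Qed.

End visit_count.

Lemma le_of_linear_bound {R : archiRealFieldType} (x y C : R) :
  (forall L : nat, x * L%:R <= y * L%:R + C) -> x <= y.
Proof.
move=> bound; rewrite leNgt; apply/negP => yx.
have C0 : 0 <= C by have := bound 0%N; rewrite !mulr0 add0r.
have xy0 : 0 < x - y by rewrite subr_gt0.
have := archi_boundP (divr_ge0 C0 (ltW xy0)); set L := Num.bound _.
rewrite ltr_pdivrMr // => CL; have := bound L.
rewrite mulrBr in CL; lra.
Qed.

Section measure_preserving_map.
Context {R : realType} (T : R -> R).
Local Notation mu := (@lebesgue_measure R).
Hypothesis T_I01 : forall x, I01 x -> I01 (T x).
Hypothesis T_measurable :
  forall B, measurable B -> measurable (I01 `&` T @^-1` B).
Hypothesis T_preserves_measure :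
  forall B, measurable B -> mu (I01 `&` T @^-1` B) = mu (I01 `&` B).

Lemma I01_preimage_iterS j B :
  I01 `&` iter j.+1 T @^-1` B = I01 `&` T @^-1` (I01 `&` iter j T @^-1` B).
Proof.
apply/seteqP; split => x [Ix Bx]; split => //.
  by split; [exact: T_I01 | rewrite /preimage /= -iterSr].
by case: Bx => _; rewrite /preimage /= -iterSr.
Qed.

Lemma measurable_preimage_iter j B : measurable (I01 `&` B) ->
  measurable (I01 `&` iter j T @^-1` B).
Proof.
move=> mB; elim: j => // j IH.
by rewrite I01_preimage_iterS; exact: T_measurable.
Qed.

Lemma measure_preimage_iter j B : measurable (I01 `&` B) ->
  mu (I01 `&` iter j T @^-1` B) = mu (I01 `&` B).
Proof.
move=> mB; elim: j => // j IH.
rewrite I01_preimage_iterS T_preserves_measure ?setIA ?setIid //.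
exact: measurable_preimage_iter.
Qed.

Lemma indic_preimage_iter j B x : I01 x ->
  \1_(I01 `&` iter j T @^-1` B) x = \1_B (iter j T x) :> R.
Proof. by move=> Ix; rewrite !indicE in_setI mem_set. Qed.

Lemma measurable_visit_count B n : measurable (I01 `&` B) ->
  measurable_fun I01 (fun x => visit_count T B x n : R).
Proof.
move=> mB.
have msum : measurable_fun I01
    (fun x => \sum_(i < n) \1_(I01 `&` iter i T @^-1` B) x : R).
  apply: measurable_sum => i; apply: measurable_indic.
  exact: measurable_preimage_iter.
apply: eq_measurable_fun msum => x /[!inE] Ix.
by apply: eq_bigr => i _; exact: indic_preimage_iter.
Qed.

Lemma integral_visit_count B n : measurable (I01 `&` B) ->
  (\int[mu]_(x in I01) (visit_count T B x n)%:E = mu (I01 `&` B) *+ n)%E.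
Proof.
move=> mB.
transitivity (\int[mu]_(x in I01) \sum_(i < n) (\1_(I01 `&` iter i T @^-1` B) x)%:E)%E.
  apply: eq_integral => x /[!inE] Ix; rewrite sumEFin; congr (_%:E).
  by apply: eq_bigr => i _; rewrite indic_preimage_iter.
rewrite ge0_integral_sum //; last 2 first.
- exact: measurable_I01.
- move=> i; apply: measurableT_comp => //; apply: measurable_indic.
  exact: measurable_preimage_iter.
rewrite (eq_bigr (fun=> mu (I01 `&` B))) ?sumr_const ?card_ord // => i _.
rewrite integral_indic; last 2 first.
- exact: measurable_I01.
- exact: measurable_preimage_iter.
by rewrite setIC setIA setIid; exact: measure_preimage_iter.
Qed.

Lemma measurable_good_set A (c : R) M : measurable (I01 `&` A) ->
  measurable (I01 `&` good_set T A c M).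
Proof.
move=> mA.
have -> : I01 `&` good_set T A c M = \bigcap_(n in [set n | (n <= M)%N])
    (I01 `&` (fun x => visit_count T A x n) @^-1` `[c * n%:R, +oo[%classic).
  apply/seteqP; split => [x [Ix Gx] n nM|x Gx].
    by split => //=; rewrite in_itv /= andbT; exact: Gx.
  split; first exact: (Gx 0%N (leq0n M)).1.
  by move=> n nM; have [_ /=] := Gx n nM; rewrite in_itv /= andbT.
apply: bigcap_measurable; first by exists 0%N.
move=> n _; apply: measurable_visit_count => //; exact: measurable_I01.
Qed.

Lemma measure_le_good_set A (c : R) M : measurable (I01 `&` A) -> 0 <= c ->
  fine (mu (I01 `&` A)) <= c + fine (mu (I01 `&` good_set T A c M)).
Proof.
move=> mA c0; set G := good_set T A c M.
have mG : measurable (I01 `&` G) by exact: measurable_good_set.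
apply: (le_of_linear_bound (C := M%:R)) => L.
have : (\int[mu]_(x in I01) (visit_count T A x L)%:E <=
    \int[mu]_(x in I01) ((c * L%:R + M%:R)%:E + (visit_count T G x L)%:E))%E.
  apply: ge0_le_integral => //.
  - exact: measurable_I01.
  - by move=> x _; rewrite lee_fin visit_count_ge0.
  - by apply/measurable_EFinP; exact: measurable_visit_count.
  - apply/measurable_EFinP; apply: measurable_funD => //.
    exact: measurable_visit_count.
  - by move=> x _; rewrite -EFinD lee_fin visit_count_le_good_set.
rewrite ge0_integralD //; last 4 first.
- exact: measurable_I01.
- by move=> x _; rewrite lee_fin addr_ge0 // mulr_ge0.
- by move=> x _; rewrite lee_fin visit_count_ge0.
- by apply/measurable_EFinP; exact: measurable_visit_count.
rewrite integral_cst; last exact: measurable_I01.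
rewrite !integral_visit_count // [X in (_ * X)%E](_ : _ = 1%E) ?mule1; last first.
  exact: lebesgue_measure_I01.
move: (fin_num_measure_I01 mA) (fin_num_measure_I01 mG).
case: (mu (I01 `&` A)) => // a _; case: (mu (I01 `&` G)) => // g _ /=.
rewrite -!EFin_natmul -EFinD lee_fin -(mulr_natr a) -(mulr_natr g); lra.
Qed.

Theorem exists_frequent_visitor A : measurable (I01 `&` A) ->
  (0 < mu (I01 `&` A))%E ->
  exists2 c : R, 0 < c &
    exists2 x0, I01 x0 & forall n, c * n%:R <= visit_count T A x0 n.
Proof.
move=> mA A0; set e := fine (mu (I01 `&` A)).
have e0 : 0 < e by rewrite -lte_fin fineK // fin_num_measure_I01.
have e2 : 0 < e / 2 by rewrite divr_gt0.
exists (e / 2) => //.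
apply: contrapT => no_visitor; pose G M := I01 `&` good_set T A (e / 2) M.
have mG M : measurable (G M) by exact: measurable_good_set.
have G_empty : \bigcap_M G M = set0.
  apply/seteqP; split => // y Gy; apply: no_visitor; exists y; first exact: (Gy 0%N I).1.
  by move=> n; exact: (Gy n I).2 n (leqnn n).
have : mu \o G @ \oo --> mu (\bigcap_M G M).
  apply: nonincreasing_cvg_mu => //.
  - by have /fin_numPlt/andP[] := fin_num_measure_I01 (mG 0%N).
  - by rewrite G_empty.
  - by move=> M N MN; rewrite subsetEset; apply: setIS; exact: good_set_subset.
rewrite G_empty measure0 => /fine_cvgP[_] /cvgr_lt /(_ (e / 2)) /(_ e2).
case=> M _ /(_ M (leqnn M)) /= small_GM.
have := measure_le_good_set M mA (ltW e2); rewrite -/e -/(G M).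
lra.
Qed.

End measure_preserving_map.

Lemma IET_measure_preserving {R : realType} (T : R -> R) : is_IET T ->
  (forall B, measurable B -> measurable (I01 `&` T @^-1` B)) /\
  (forall B, measurable B ->
    lebesgue_measure (I01 `&` T @^-1` B) = lebesgue_measure (I01 `&` B)).
Proof.
case=> T_I01 [T_inj [T_surj [k [a [t [a0 [ak [lt_a T_piece]]]]]]]].
split=> B; first exact: measurable_IET_preimage a0 ak lt_a T_piece B.
exact: measure_IET_preimage T_I01 T_inj T_surj a0 ak lt_a T_piece B.
Qed.

Lemma visits_visit_count {R : realType} (T : R -> R) E x n :
  (visits T E x n)%:R = visit_count T E x n :> R.
Proof.
rewrite /visits /visit_count -sum1_card natr_sum big_mkcond /=.
apply: eq_bigr => i _; rewrite indicE.
have [Ei|nEi] := asboolP (E (iter i T x)); first by rewrite !mem_set //=; apply/asboolP.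
by rewrite !memNset //=; move/asboolP.
Qed.

Theorem mainTheorem16 (R : realType) (E : set R) (T : R -> R) :
  measurable E -> E `<=` I01 -> (0 < (@lebesgue_measure R) E)%E ->
  is_IET T ->
  exists x0 : R, I01 x0 /\
    exists alpha beta : R, 0 < alpha /\ 0 < beta /\
      forall n : nat, (1 <= n)%N ->
        alpha * n%:R - beta <= (visits T E x0 n)%:R.
Proof.
move=> mE sub_E E0 IET; have [mT muT] := IET_measure_preserving IET.
have mIE : measurable (I01 `&` E) by rewrite setIidr.
have IE0 : (0 < lebesgue_measure (I01 `&` E))%E by rewrite setIidr.
have [c c0 [x0 Ix0 visits_x0]] := exists_frequent_visitor IET.1 mT muT mIE IE0.
exists x0; split => //; exists c, 1; do 2!split => //.
by move=> n _; rewrite visits_visit_count; have := visits_x0 n; lra.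
Qed.
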